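(* In the structural equation model of the context, let $S_1,\dots,S_m\subsetneq\{1,\dots,q\}$, let $\beta$ be deterministic with $\|\beta\|=\rho_\beta$, and let $\gamma$ be a spherically symmetric random vector in $\mathbb{R}^q$ with $\mathbb{E}\|\gamma\|^4=O(\rho_\gamma^4/q^2)$. Let $\mathbf{C}_m=\frac1m\sum_{j=1}^m\mathbf{C}(S_j)$ and $\widetilde{\mathbf{C}}_m=\frac1m\sum_{j=1}^m\mathbf{C}(S_j)^\top\mathbf{C}(S_j)$. Then: (1) if $\rho_\beta=0$, $\mathcal{V}(\hat\beta(S_1),\dots,\hat\beta(S_m))=1-\dfrac{\gamma^\top\mathbf{C}_m^\top\mathbf{C}_m\gamma}{\gamma^\top\widetilde{\mathbf{C}}_m\gamma}$; (2) if $\rho_\gamma^2/\rho_\beta^2\to0$ (all other quantities fixed), then $\mathbb{E}\,\mathcal{V}(\hat\beta(S_1),\dots,\hat\beta(S_m))=o(1)$.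
   Context: Structural equation model: fix integers $d,q,r\ge1$. Let $N_z\in\mathbb{R}^r$, $N_w\in\mathbb{R}^q$, $N_x\in\mathbb{R}^d$, $N_y\in\mathbb{R}$ be mutually independent zero-mean random vectors, independent of $\gamma$, with $\operatorname{Cov}(N_z)=I_r$, $\operatorname{Cov}(N_w)=\operatorname{diag}(\sigma_{w,1}^2,\dots,\sigma_{w,q}^2)$ with all $\sigma_{w,i}^2>0$, $\operatorname{Cov}(N_x)=\mathbf{D}_x$ a positive definite diagonal matrix, and $\operatorname{Var}(N_y)=\sigma_y^2>0$. With $\mathbf{A}\in\mathbb{R}^{q\times r}$, $\mathbf{B}\in\mathbb{R}^{d\times r}$, $\beta\in\mathbb{R}^d$, $\gamma\in\mathbb{R}^q$, set $Z=N_z$, $W=\mathbf{A}Z+N_w$, $X=\mathbf{B}Z+N_x$, $Y=\beta^\top X+\gamma^\top W+N_y$. For $S\subseteq\{1,\dots,q\}$, $S^c=\{1,\dots,q\}\setminus S$; $v_S$ is the subvector of $v$ with indices in $S$; $\mathbf{A}_S$ is the submatrix of rows of $\mathbf{A}$ indexed by $S$; $\mathbf{D}_S=\operatorname{diag}(\sigma_{w,i}^2)_{i\in S}$. Population regression coefficient: for fixed $\gamma$, $\hat\beta(S)=(I_d,\mathbf{0})\operatorname{Var}((X,W_S))^{-1}\operatorname{Cov}((X,W_S),Y)\in\mathbb{R}^d$. Confounding matrix: $\mathbf{C}(S)\in\mathbb{R}^{d\times q}$ has zero columns for indices in $S$, and its submatrix of columns indexed by $S^c$ equals $\mathbf{D}_x^{-1}\mathbf{B}(I_r+\mathbf{B}^\top\mathbf{D}_x^{-1}\mathbf{B}+\mathbf{A}_S^\top\mathbf{D}_S^{-1}\mathbf{A}_S)^{-1}\mathbf{A}_{S^c}^\top$.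 Stability statistic: $\mathcal{V}(v_1,\dots,v_m)=1-\frac{\|m^{-1}\sum_{j}v_j\|^2}{m^{-1}\sum_j\|v_j\|^2}$. Spherical symmetry: a random vector $\nu\in\mathbb{R}^q$ is spherically symmetric if $e^\top\nu$ has the same distribution as $\nu_1$ for every unit vector $e$. *)

From HB Require Import structures.
From mathcomp Require Import all_boot all_order all_algebra.
From mathcomp Require Import all_classical all_reals all_analysis.
Set Implicit Arguments. Unset Strict Implicit. Unset Printing Implicit Defensive.
Import Order.TTheory GRing.Theory Num.Theory.
Local Open Scope ring_scope.

Section SEM.
Variable R : realType.

Definition sqnorm {n} (v : 'cV[R]_n) : R := \sum_i v i 0 ^+ 2.

(* selection matrix: (selmx S) *m W = W_S  (rows of S in increasing order) *)
Definition selmx {q} (S : {set 'I_q}) : 'M[R]_(#|S|, q) :=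
  \matrix_(i, j) (enum_val i == j)%:R.

(* Population second moments of the SEM
   Z = N_z, W = A Z + N_w, X = B Z + N_x, Y = beta^T X + gamma^T W + N_y,
   with Cov(N_z) = I_r, Cov(N_w) = diag(sw), Cov(N_x) = diag(dx),
   mutually independent zero-mean noises. *)
Definition VarX {d r} (B : 'M[R]_(d, r)) (dx : 'rV[R]_d) : 'M[R]_d :=
  B *m B^T + diag_mx dx.
Definition VarW {q r} (A : 'M[R]_(q, r)) (sw : 'rV[R]_q) : 'M[R]_q :=
  A *m A^T + diag_mx sw.
Definition CovXW {d q r} (A : 'M[R]_(q, r)) (B : 'M[R]_(d, r)) : 'M[R]_(d, q) :=
  B *m A^T.

Definition VarXWS {d q r} (A : 'M[R]_(q, r)) (B : 'M[R]_(d, r))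
  (dx : 'rV[R]_d) (sw : 'rV[R]_q) (S : {set 'I_q}) : 'M[R]_(d + #|S|) :=
  block_mx (VarX B dx) (CovXW A B *m (selmx S)^T)
           (selmx S *m (CovXW A B)^T) (selmx S *m VarW A sw *m (selmx S)^T).

Definition CovXWSY {d q r} (A : 'M[R]_(q, r)) (B : 'M[R]_(d, r))
  (dx : 'rV[R]_d) (sw : 'rV[R]_q) (beta : 'cV[R]_d) (gam : 'cV[R]_q)
  (S : {set 'I_q}) : 'cV[R]_(d + #|S|) :=
  col_mx (VarX B dx *m beta + CovXW A B *m gam)
         (selmx S *m ((CovXW A B)^T *m beta + VarW A sw *m gam)).

Definition betahat {d q r} (A : 'M[R]_(q, r)) (B : 'M[R]_(d, r))
  (dx : 'rV[R]_d) (sw : 'rV[R]_q) (beta : 'cV[R]_d) (gam : 'cV[R]_q)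
  (S : {set 'I_q}) : 'cV[R]_d :=
  usubmx (invmx (VarXWS A B dx sw S) *m CovXWSY A B dx sw beta gam S).

Definition confmx {d q r} (A : 'M[R]_(q, r)) (B : 'M[R]_(d, r))
  (dx : 'rV[R]_d) (sw : 'rV[R]_q) (S : {set 'I_q}) : 'M[R]_(d, q) :=
  let Dxi := invmx (diag_mx dx) in
  let AS := selmx S *m A in
  let DS := selmx S *m diag_mx sw *m (selmx S)^T in
  let M := 1%:M + B^T *m Dxi *m B + AS^T *m invmx DS *m AS in
  let Cf := Dxi *m B *m invmx M *m A^T in
  \matrix_(i, j) (if j \in S then 0 else Cf i j).

(* stability statistic V(v_1, ..., v_m); division by 0 is 0 (MathComp) *)
Definition Vstat {d m} (v : 'I_m -> 'cV[R]_d) : R :=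
  1 - sqnorm (m%:R^-1 *: \sum_j v j) / (m%:R^-1 * \sum_j sqnorm (v j)).

End SEM.

Definition spherically_symmetric {R : realType} {d0 : measure_display}
  {T : measurableType d0} (P : probability T R) {q : nat} (hq : (0 < q)%N)
  (g : T -> 'cV[R]_q) : Prop :=
  forall e : 'cV[R]_q, sqnorm e = 1 ->
  forall Bs : set R, measurable Bs ->
    P [set w | ((e^T *m g w) 0 0) \in Bs]%classic
    = P [set w | g w (Ordinal hq) 0 \in Bs]%classic.

(* (X, W_S) loads on Z through F = [B; A_S] and has independent noise with
   diagonal covariance D, so Var((X, W_S)) = F F^T + D.  The push-through
   identity (F F^T + D) D^-1 F = F (I + F^T D^-1 F) solves the normal equations
   and gives betahat(S) = beta + C(S) gamma; part (1) is then the definition of V.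
   For part (2), the vectors beta + w_j have spread at most mean |w_j|^2 and mean
   square at least |beta|^2 / 4 once |beta|^2 >= 4 mean |w_j|^2, hence
   V <= 4 mean |w_j|^2 / |beta|^2 <= c |gamma|^2 / rho_beta^2.  The fourth moment
   bound makes the second moment of the right-hand side O((rho_gamma/rho_beta)^4),
   so E V -> 0. *)

From HB Require Import structures.
From mathcomp Require Import all_boot all_order all_algebra.
From mathcomp Require Import all_classical all_reals all_analysis.
From mathcomp Require Import measurable_realfun ring lra.
Set Implicit Arguments. Unset Strict Implicit. Unset Printing Implicit Defensive.
Import Order.TTheory GRing.Theory Num.Theory.
Import numFieldNormedType.Exports.
Local Open Scope classical_set_scope.
Local Open Scope ring_scope.

Section QuadraticForms.
Variable R : realType.

Definition qform n (Q : 'M[R]_n) (x : 'cV[R]_n) : R := (x^T *m Q *m x) 0 0.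

Definition psdmx n (Q : 'M[R]_n) : Prop := forall x, 0 <= qform Q x.

Lemma qformD n (Q1 Q2 : 'M[R]_n) x : qform (Q1 + Q2) x = qform Q1 x + qform Q2 x.
Proof. by rewrite /qform mulmxDr mulmxDl mxE. Qed.

Lemma qform_diag n (e : 'rV[R]_n) x : qform (diag_mx e) x = \sum_i e 0 i * x i 0 ^+ 2.
Proof.
by rewrite /qform mul_mx_diag mxE; apply: eq_bigr => i _; rewrite !mxE; ring.
Qed.

Lemma qform1 n (x : 'cV[R]_n) : qform 1%:M x = sqnorm x.
Proof. by rewrite /qform mulmx1 mxE; apply: eq_bigr => i _; rewrite !mxE expr2. Qed.

Lemma qform_congr n k (G : 'M[R]_(n, k)) (Q : 'M[R]_n) x :
  qform (G^T *m Q *m G) x = qform Q (G *m x).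
Proof. by rewrite /qform trmx_mul !mulmxA. Qed.

Lemma sqnorm_ge0 n (x : 'cV[R]_n) : 0 <= sqnorm x.
Proof. by apply: sumr_ge0 => i _; exact: sqr_ge0. Qed.

Lemma psdmx_congr n k (G : 'M[R]_(n, k)) (Q : 'M[R]_n) :
  psdmx Q -> psdmx (G^T *m Q *m G).
Proof. by move=> hQ x; rewrite qform_congr. Qed.

Lemma psdmx_diag n (e : 'rV[R]_n) : (forall i, 0 <= e 0 i) -> psdmx (diag_mx e).
Proof. by move=> he x; rewrite qform_diag sumr_ge0 // => i _; rewrite mulr_ge0 ?sqr_ge0. Qed.

Lemma psdmx_gram n k (F : 'M[R]_(n, k)) : psdmx (F *m F^T).
Proof.
have -> : F *m F^T = F^T^T *m 1%:M *m F^T by rewrite mulmx1 trmxK.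
by apply: psdmx_congr => x; rewrite qform1 sqnorm_ge0.
Qed.

Lemma qform_diag_eq0 n (e : 'rV[R]_n) x : (forall i, 0 < e 0 i) ->
  qform (diag_mx e) x = 0 -> x = 0.
Proof.
move=> he; rewrite qform_diag => /eqP; rewrite psumr_eq0 => [/allP ex0|i _]; last first.
  by rewrite mulr_ge0 ?sqr_ge0 ?ltW.
apply/matrixP => i j; rewrite (ord1 j) mxE.
by have := ex0 i (mem_index_enum i); rewrite /= mulf_eq0 sqrf_eq0 gt_eqF //= => /eqP.
Qed.

Lemma unitmx_psdmxD_diag n (Q : 'M[R]_n) (e : 'rV[R]_n) :
  psdmx Q -> (forall i, 0 < e 0 i) -> Q + diag_mx e \in unitmx.
Proof.
move=> hQ he; rewrite unitmxE unitfE; apply/det0P => -[v v0 vQ].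
have : qform (Q + diag_mx e) v^T = 0 by rewrite /qform trmxK vQ mul0mx mxE.
rewrite qformD => hq.
have /(qform_diag_eq0 he) /(congr1 trmx) : qform (diag_mx e) v^T = 0.
  have hD : 0 <= qform (diag_mx e) v^T by apply: psdmx_diag => i; exact: ltW.
  by have := hQ v^T; lra.
by rewrite trmxK trmx0 => /eqP; rewrite (negPf v0).
Qed.

End QuadraticForms.

Section MatrixInverses.
Variable F : fieldType.

Lemma invmx_eq n (X Y : 'M[F]_n) : X *m Y = 1%:M -> invmx X = Y.
Proof. by move=> XY; have [uX _] := mulmx1_unit XY; rewrite -(mulKmx uX Y) XY mulmx1. Qed.

Lemma unitmx_diag n (e : 'rV[F]_n) : (forall i, e 0 i != 0) -> diag_mx e \in unitmx.
Proof. by move=> e0; rewrite unitmxE unitfE det_diag; apply/prodf_neq0 => i _. Qed.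

Lemma invmx_diag n (e : 'rV[F]_n) : (forall i, e 0 i != 0) ->
  invmx (diag_mx e) = diag_mx (\row_i (e 0 i)^-1).
Proof.
move=> e0; apply: invmx_eq; apply/matrixP => i j; rewrite mul_diag_mx !mxE.
by have [->|] := eqVneq i j; rewrite ?mulr1n ?mulr0n ?mulr0 ?mulfV.
Qed.

Lemma invmx_block_diag n1 n2 (X1 : 'M[F]_n1) (X2 : 'M[F]_n2) :
  X1 \in unitmx -> X2 \in unitmx ->
  invmx (block_mx X1 0 0 X2) = block_mx (invmx X1) 0 0 (invmx X2).
Proof.
move=> u1 u2; apply: invmx_eq.
by rewrite mulmx_block !mulmx0 !mul0mx !addr0 !add0r !mulmxV // -scalar_mx_block.
Qed.

Lemma gram_addmx_mulmx n k p (G : 'M[F]_(n, k)) (D : 'M[F]_n)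
    (z : 'M[F]_(k, p)) (y : 'M[F]_(n, p)) : D \in unitmx ->
  (G *m G^T + D) *m (invmx D *m G *m z + y)
  = G *m ((1%:M + G^T *m invmx D *m G) *m z + G^T *m y) + D *m y.
Proof.
move=> uD; rewrite !mulmxDr !mulmxDl !mulmxA mul1mx mulmxV // mul1mx mulmxDr !mulmxA.
by rewrite !addrA [G *m z + _]addrC.
Qed.

End MatrixInverses.

Section Selection.
Variables (R : realType) (q : nat) (S : {set 'I_q}).
Local Notation P := (selmx R S).

Lemma selmxT_mulmxE k j : (P^T *m P) k j = ((k == j) && (j \in S))%:R.
Proof.
rewrite !mxE; have [jS|jNS] := boolP (j \in S); last first.
  rewrite andbF big1 // => a _; rewrite !mxE.
  have /negbTE -> : enum_val a != j by apply: contraNneq jNS => <-; exact: enum_valP.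
  by rewrite mulr0.
rewrite andbT (bigD1 (enum_rank_in jS j)) //= !mxE enum_rankK_in // eqxx mulr1.
rewrite big1 ?addr0 1?eq_sym // => a na; rewrite !mxE.
have /negbTE -> : enum_val a != j.
  by apply: contraNneq na => ej; apply/eqP/enum_val_inj; rewrite enum_rankK_in.
by rewrite mulr0.
Qed.

Lemma selmx_compl : 1%:M - P^T *m P = diag_mx (\row_j (j \notin S)%:R).
Proof.
apply/matrixP => k j; have := selmxT_mulmxE k j; rewrite !mxE => ->.
by have [->|] := eqVneq k j; [case: (j \in S); rewrite ?subrr ?subr0 | rewrite subr0].
Qed.

Lemma selmx_diag_mxT (e : 'rV[R]_q) :
  P *m diag_mx e *m P^T = diag_mx (\row_a e 0 (enum_val a)).
Proof.
apply/matrixP => a b; rewrite mul_mx_diag !mxE (bigD1 (enum_val a)) //= !mxE eqxx mul1r.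
rewrite big1 ?addr0 => [|j /negbTE nj]; last by rewrite !mxE eq_sym nj !mul0r.
by rewrite (inj_eq enum_val_inj) eq_sym; case: (a == b); rewrite ?mulr1 ?mulr0.
Qed.

Lemma selmx_diag_mx_proj (e : 'rV[R]_q) : P *m diag_mx e *m (P^T *m P) = P *m diag_mx e.
Proof.
apply/matrixP => a j; rewrite mulmxA selmx_diag_mxT mul_diag_mx mul_mx_diag !mxE.
by have [->|] := eqVneq (enum_val a) j; rewrite ?mulr1 ?mul1r ?mulr0 ?mul0r.
Qed.

End Selection.

Section ConfoundingMatrix.
Variables (R : realType) (d q r : nat) (A : 'M[R]_(q, r)) (B : 'M[R]_(d, r)).
Variables (dx : 'rV[R]_d) (sw : 'rV[R]_q).
Hypotheses (hdx : forall i, 0 < dx 0 i) (hsw : forall i, 0 < sw 0 i).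
Variable S : {set 'I_q}.

Local Notation P := (selmx R S).
Local Notation DS := (P *m diag_mx sw *m P^T).

Let F := col_mx B (P *m A).
Let D := block_mx (diag_mx dx) 0 0 DS.
Let M := 1%:M + F^T *m invmx D *m F.
Let es : 'rV[R]_#|S| := \row_a sw 0 (enum_val a).

Let D_diag : D = diag_mx (row_mx dx es).
Proof. by rewrite /D diag_mx_row selmx_diag_mxT. Qed.

Let D_pos i : 0 < row_mx dx es 0 i.
Proof. by rewrite mxE; case: fintype.split => k; rewrite ?mxE. Qed.

Let D_unit : D \in unitmx.
Proof. by rewrite D_diag unitmx_diag // => i; rewrite gt_eqF. Qed.

Let invmx_D : invmx D = block_mx (invmx (diag_mx dx)) 0 0 (invmx DS).
Proof.
apply: invmx_block_diag; first by rewrite unitmx_diag // => i; rewrite gt_eqF.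
by rewrite selmx_diag_mxT unitmx_diag // => i; rewrite mxE gt_eqF.
Qed.

Lemma VarXWS_gram : VarXWS A B dx sw S = F *m F^T + D.
Proof.
rewrite /VarXWS /VarX /VarW /CovXW tr_col_mx mul_col_row add_block_mx.
by rewrite !addr0 !trmx_mul trmxK !mulmxA mulmxDr mulmxDl !mulmxA.
Qed.

Lemma VarXWS_unit : VarXWS A B dx sw S \in unitmx.
Proof. by rewrite VarXWS_gram D_diag unitmx_psdmxD_diag //; exact: psdmx_gram. Qed.

Let M_unit : M \in unitmx.
Proof.
rewrite /M addrC -diag_const_mx unitmx_psdmxD_diag => [//||i]; last by rewrite mxE.
apply: psdmx_congr; rewrite D_diag invmx_diag => [|i]; last by rewrite gt_eqF.
by apply: psdmx_diag => i; rewrite mxE invr_ge0 ltW.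
Qed.

Lemma confmxE :
  confmx A B dx sw S = invmx (diag_mx dx) *m B *m invmx M *m A^T *m (1%:M - P^T *m P).
Proof.
have -> : M = 1%:M + B^T *m invmx (diag_mx dx) *m B + (P *m A)^T *m invmx DS *m (P *m A).
  rewrite /M invmx_D tr_col_mx mul_row_block mul_row_col !mulmx0 addr0 add0r.
  by rewrite addrA.
rewrite selmx_compl mul_mx_diag; apply/matrixP => i j; rewrite !mxE /=.
by case: (j \in S); rewrite /= ?mulr0 ?mulr1.
Qed.

Lemma CovXWSY_split beta gam : CovXWSY A B dx sw beta gam S
  = VarXWS A B dx sw S *m col_mx beta 0 + CovXWSY A B dx sw 0 gam S.
Proof.
rewrite /CovXWSY /VarXWS mul_block_col add_col_mx !mulmx0 !addr0 !add0r.
by rewrite mulmxDr !mulmxA.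
Qed.

Lemma CovXWSY0_gram gam :
  CovXWSY A B dx sw 0 gam S = F *m (A^T *m gam) + D *m col_mx 0 (P *m gam).
Proof.
rewrite /CovXWSY /VarW /CovXW mul_col_mx mul_block_col add_col_mx.
rewrite !mulmx0 !mul0mx !add0r !addr0 !mulmxA -(mulmxA _ P^T P) selmx_diag_mx_proj.
by rewrite mulmxDr mulmxDl !mulmxA.
Qed.

Lemma betahat0_confmx gam : betahat A B dx sw 0 gam S = confmx A B dx sw S *m gam.
Proof.
pose z := invmx M *m (A^T *m ((1%:M - P^T *m P) *m gam)).
have solve : VarXWS A B dx sw S *m (invmx D *m F *m z + col_mx 0 (P *m gam))
             = CovXWSY A B dx sw 0 gam S.
  rewrite VarXWS_gram gram_addmx_mulmx // -/M mulKVmx // CovXWSY0_gram.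
  rewrite tr_col_mx mul_row_col mulmx0 add0r trmx_mul -mulmxA -mulmxDr.
  by rewrite mulmxBl mul1mx -(mulmxA P^T) subrK.
rewrite /betahat -solve mulKmx ?VarXWS_unit // invmx_D mul_block_col !mul0mx !addr0.
by rewrite add0r !mul_col_mx add_col_mx col_mxKu addr0 confmxE /z !mulmxA.
Qed.

Lemma betahat_confmx beta gam :
  betahat A B dx sw beta gam S = beta + confmx A B dx sw S *m gam.
Proof.
rewrite /betahat CovXWSY_split mulmxDr mulKmx ?VarXWS_unit // -betahat0_confmx.
by rewrite -[X in _ + X]vsubmxK add_col_mx col_mxKu.
Qed.

End ConfoundingMatrix.

Section StabilityStatistic.
Variables (R : realType) (d m : nat).
Hypothesis m_gt0 : (0 < m)%N.

Definition mean (x : 'I_m -> R) : R := m%:R^-1 * \sum_j x j.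

Definition mean_sqnorm (v : 'I_m -> 'cV[R]_d) : R := mean (fun j => sqnorm (v j)).

Let m_neq0 : m%:R != 0 :> R.
Proof. by rewrite pnatr_eq0 -lt0n. Qed.

Lemma mean_ge0 x : (forall j, 0 <= x j) -> 0 <= mean x.
Proof. by move=> x0; rewrite mulr_ge0 ?invr_ge0 // sumr_ge0. Qed.

Lemma mean_sqr_shift x c : mean (fun j => x j ^+ 2) - mean x ^+ 2
  = mean (fun j => (x j - c) ^+ 2) - (mean x - c) ^+ 2.
Proof.
rewrite /mean; have -> : \sum_j (x j - c) ^+ 2
    = \sum_j x j ^+ 2 - 2 * c * \sum_j x j + m%:R * c ^+ 2.
  rewrite (eq_bigr (fun j => x j ^+ 2 - 2 * c * x j + c ^+ 2)) => [|j _]; last by ring.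
  by rewrite big_split /= sumrB -mulr_sumr sumr_const card_ord [m%:R * _]mulr_natl.
by field.
Qed.

Lemma sqr_mean_le x : mean x ^+ 2 <= mean (fun j => x j ^+ 2).
Proof.
rewrite -subr_ge0 (mean_sqr_shift x (mean x)) subrr expr0n subr0.
by apply: mean_ge0 => j; exact: sqr_ge0.
Qed.

Lemma mean_sqr_sub_le x c :
  mean (fun j => x j ^+ 2) - mean x ^+ 2 <= mean (fun j => (x j - c) ^+ 2).
Proof. by rewrite (mean_sqr_shift x c) lerBlDr lerDl sqr_ge0. Qed.

Lemma mean_sqr_shift_ge c y :
  c ^+ 2 / 2 - mean (fun j => y j ^+ 2) <= mean (fun j => (c + y j) ^+ 2).
Proof.
have -> : c ^+ 2 / 2 - mean (fun j => y j ^+ 2) = mean (fun j => c ^+ 2 / 2 - y j ^+ 2).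
  by rewrite /mean sumrB sumr_const card_ord -mulr_natr; field.
rewrite ler_wpM2l ?invr_ge0 // ler_sum // => j _.
by have := sqr_ge0 (c + 2 * y j); nra.
Qed.

Lemma mean_sqnorm_coord (v : 'I_m -> 'cV[R]_d) :
  mean_sqnorm v = \sum_i mean (fun j => v j i 0 ^+ 2).
Proof. by rewrite /mean_sqnorm /mean /sqnorm -mulr_sumr exchange_big. Qed.

Lemma sqnorm_mean_coord (v : 'I_m -> 'cV[R]_d) :
  sqnorm (m%:R^-1 *: \sum_j v j) = \sum_i mean (fun j => v j i 0) ^+ 2.
Proof. by apply: eq_bigr => i _; rewrite mxE summxE. Qed.

Lemma sqnorm_mean_le (v : 'I_m -> 'cV[R]_d) : sqnorm (m%:R^-1 *: \sum_j v j) <= mean_sqnorm v.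
Proof. by rewrite sqnorm_mean_coord mean_sqnorm_coord ler_sum // => i _; exact: sqr_mean_le. Qed.

Lemma Vstat_ge0 (v : 'I_m -> 'cV[R]_d) : 0 <= Vstat v.
Proof.
rewrite /Vstat -/(mean _) -/(mean_sqnorm v) subr_ge0.
have [->|] := eqVneq (mean_sqnorm v) 0; first by rewrite invr0 mulr0.
rewrite neq_lt ltNge (mean_ge0 (fun j => sqnorm_ge0 (v j))) /= => v_gt0.
by rewrite ler_pdivrMr // mul1r sqnorm_mean_le.
Qed.

Lemma Vstat_shift_le (c : 'cV[R]_d) (w : 'I_m -> 'cV[R]_d) : 0 < sqnorm c ->
  Vstat (fun j => c + w j) <= 4 * mean_sqnorm w / sqnorm c.
Proof.
move=> c_gt0; set v := fun j => c + w j.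
have vE i j : v j i 0 = c i 0 + w j i 0 by rewrite mxE.
have spread : mean_sqnorm v - sqnorm (m%:R^-1 *: \sum_j v j) <= mean_sqnorm w.
  rewrite sqnorm_mean_coord !mean_sqnorm_coord -sumrB ler_sum // => i _.
  apply: le_trans (mean_sqr_sub_le _ (c i 0)) _.
  by under eq_fun do rewrite vE addrC addKr.
have large : sqnorm c / 2 - mean_sqnorm w <= mean_sqnorm v.
  rewrite !mean_sqnorm_coord /sqnorm mulr_suml -sumrB ler_sum // => i _.
  suff -> : (fun j => v j i 0 ^+ 2) = (fun j => (c i 0 + w j i 0) ^+ 2).
    exact: mean_sqr_shift_ge.
  by apply: funext => j; rewrite vE.
have w0 : 0 <= mean_sqnorm w by apply: mean_ge0 => j; exact: sqnorm_ge0.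
have V0 := Vstat_ge0 v; have b0 := sqnorm_ge0 (m%:R^-1 *: \sum_j v j).
rewrite /Vstat -/(mean _) -/(mean_sqnorm v) in V0 *.
rewrite ler_pdivlMr //; have [small|] := lerP (sqnorm c) (4 * mean_sqnorm w).
  rewrite (le_trans _ small) // ler_piMl ?sqnorm_ge0 // lerBlDr lerDl.
  by rewrite divr_ge0 // mean_ge0 // => j; exact: sqnorm_ge0.
move=> big; have a_gt0 : 0 < mean_sqnorm v by lra.
set a := mean_sqnorm v in spread large a_gt0 V0 *.
set b := sqnorm (m%:R^-1 *: _) in spread b0 V0 *.
have : (1 - b / a) * a = a - b by field; rewrite gt_eqF.
set V := 1 - b / a in V0 *; nra.
Qed.

End StabilityStatistic.

Section FrobeniusBound.
Variable R : realType.

Lemma sum_mul_sqr_le n (a b : 'I_n -> R) :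
  (\sum_k a k * b k) ^+ 2 <= (\sum_k a k ^+ 2) * (\sum_k b k ^+ 2).
Proof.
have prod_sum (x y : 'I_n -> R) :
    (\sum_k x k) * (\sum_l y l) = \sum_k \sum_l x k * y l.
  by rewrite mulr_suml; under eq_bigr do rewrite mulr_sumr.
rewrite -(@ler_pM2l _ 2) // expr2 !prod_sum mulr2n !mulrDl !mul1r.
rewrite [X in _ <= _ + X]exchange_big -!big_split ler_sum // => k _.
rewrite -!big_split ler_sum // => l _ /=.
by have := sqr_ge0 (a k * b l - a l * b k); nra.
Qed.

Lemma sqnorm_mulmx_le p n (M : 'M[R]_(p, n)) (x : 'cV[R]_n) :
  sqnorm (M *m x) <= (\sum_i \sum_k M i k ^+ 2) * sqnorm x.
Proof.
rewrite /sqnorm mulr_suml ler_sum // => i _; rewrite mxE.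
exact: (sum_mul_sqr_le (fun k => M i k) (fun k => x k 0)).
Qed.

End FrobeniusBound.

Section IntegralBounds.
Context d0 (T : measurableType d0) (R : realType).

(* Monotonicity of the integral of nonnegative functions needs no measurability:
   it is a supremum over the simple functions below the integrand. *)
Lemma le_ge0_integral (mu : {measure set T -> \bar R}) (f1 f2 : T -> \bar R) :
  (forall x, 0 <= f1 x)%E -> (forall x, f1 x <= f2 x)%E ->
  (\int[mu]_x f1 x <= \int[mu]_x f2 x)%E.
Proof.
move=> f10 f12; have f20 x : (0 <= f2 x)%E := le_trans (f10 x) (f12 x).
rewrite (ge0_integralTE mu f10) (ge0_integralTE mu f20).
by apply: ereal_sup_le => _ [h hf1 <-]; exists h => //= x; exact: le_trans (hf1 x) (f12 x).
Qed.

Lemma integral_scaled_sqr_le (mu : {measure set T -> \bar R}) (Y : T -> R) (a b : R) :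
  measurable_fun setT Y -> (\int[mu]_w (Y w ^+ 2)%:E <= b%:E)%E ->
  (\int[mu]_w ((a * Y w) ^+ 2)%:E <= (a ^+ 2 * b)%:E)%E.
Proof.
move=> mY IY; under eq_integral do rewrite exprMn EFinM.
rewrite ge0_integralZl_EFin ?sqr_ge0 //; last exact/measurable_EFinP/measurable_funX.
- by rewrite [X in (_ <= X)%E]EFinM lee_wpmul2l // lee_fin sqr_ge0.
- by move=> w _; rewrite lee_fin sqr_ge0.
Qed.

Variable P : probability T R.

Lemma ge0_integral_cstDZ (a b : R) (f : T -> R) :
  0 <= a -> 0 <= b -> (forall w, 0 <= f w) -> measurable_fun setT f ->
  (\int[P]_w (a + b * f w)%:E = a%:E + b%:E * \int[P]_w (f w)%:E)%E.
Proof.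
move=> a0 b0 f0 mf; under eq_integral do rewrite EFinD EFinM.
rewrite ge0_integralD //; last 2 first.
- by move=> w _; rewrite -EFinM lee_fin mulr_ge0.
- exact/measurable_EFinP/measurable_funM.
rewrite integral_cst // -[X in (a%:E * X)%E]/(P [set: T] : \bar R) probability_setT mule1.
by rewrite ge0_integralZl_EFin //; [move=> w _; rewrite lee_fin | exact/measurable_EFinP].
Qed.

(* [V <= X <= e + X^2 / e] for every [e > 0]; take [e = s n + 1/(n+1)]. *)
Lemma integral_cvg0_sqr_bound (V X : nat -> T -> R) (s : nat -> R) (k : R) :
  (forall n w, 0 <= V n w) -> (forall n w, V n w <= X n w) ->
  (forall n, measurable_fun setT (X n)) ->
  (forall n, (\int[P]_w (X n w ^+ 2)%:E <= (k * s n ^+ 2)%:E)%E) ->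
  (forall n, 0 <= s n) -> s @ \oo --> 0 ->
  (fun n => \int[P]_w (V n w)%:E)%E @ \oo --> 0%E.
Proof.
move=> V0 VX mX IX s0 s_cvg.
pose e n := s n + harmonic n.
have e_gt0 n : 0 < e n by rewrite ltr_wpDl ?harmonic_gt0.
have V_le n w : V n w <= e n + (e n)^-1 * X n w ^+ 2.
  apply: le_trans (VX n w) _; rewrite -(ler_pM2r (e_gt0 n)) mulrDl mulrAC mulVf ?gt_eqF //.
  have := sqr_ge0 (X n w - e n); have := le_trans (V0 n w) (VX n w).
  by have := e_gt0 n; nra.
have IV n : (\int[P]_w (V n w)%:E <= (e n + `|k| * s n)%:E)%E.
  apply: (@le_trans _ _ (\int[P]_w (e n + (e n)^-1 * X n w ^+ 2)%:E)%E).
    by apply: le_ge0_integral => w; rewrite lee_fin.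
  have e_ge0 := ltW (e_gt0 n); have ei_ge0 : 0 <= (e n)^-1 by rewrite invr_ge0.
  rewrite ge0_integral_cstDZ //; last 2 first.
  - by move=> w; exact: sqr_ge0.
  - exact: measurable_funX.
  rewrite [X in (_ <= X)%E]EFinD leeD2l //.
  apply: le_trans (lee_wpmul2l _ (IX n)) _; first by rewrite lee_fin.
  rewrite -EFinM lee_fin mulrC ler_pdivrMr //.
  apply: le_trans (ler_wpM2r (sqr_ge0 _) (ler_norm k)) _.
  by rewrite expr2 mulrA ler_wpM2l ?mulr_ge0 // lerDl harmonic_ge0.
have u_cvg : (fun n => e n + `|k| * s n) @ \oo --> 0.
  have -> : 0 = 0 + 0 + `|k| * 0 :> R by rewrite mulr0 !addr0.
  by apply: cvgD; [apply: cvgD; [exact: s_cvg | exact: cvg_harmonic] | exact: cvgMl_tmp].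
apply: (@squeeze_cvge _ _ _ _ (cst 0%E) _ (fun n => (e n + `|k| * s n)%:E)).
- apply: nearW => n; rewrite IV andbT.
  by apply: integral_ge0 => w _; rewrite lee_fin.
- exact: cvg_cst.
- by apply/fine_cvgP; split; [exact: nearW | exact: u_cvg].
Qed.

End IntegralBounds.

Lemma measurable_sqnorm d0 (T : measurableType d0) (R : realType) n (g : T -> 'cV[R]_n) :
  (forall i, measurable_fun setT (fun w => g w i 0)) ->
  measurable_fun setT (fun w => sqnorm (g w)).
Proof. by move=> mg; apply: measurable_sum => i; exact: measurable_funX. Qed.

Section ConfoundedStability.
Variables (R : realType) (d q r m : nat) (A : 'M[R]_(q, r)) (B : 'M[R]_(d, r)).
Variables (dx : 'rV[R]_d) (sw : 'rV[R]_q).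
Hypotheses (hdx : forall i, 0 < dx 0 i) (hsw : forall i, 0 < sw 0 i).
Variable S : 'I_m -> {set 'I_q}.
Hypothesis m_gt0 : (0 < m)%N.

Local Notation C j := (confmx A B dx sw (S j)).

Lemma Vstat_betahat0 gam :
  Vstat (fun j => betahat A B dx sw 0 gam (S j))
  = 1 - (gam^T *m (m%:R^-1 *: \sum_j C j)^T *m (m%:R^-1 *: \sum_j C j) *m gam) 0 0
        / (gam^T *m (m%:R^-1 *: \sum_j ((C j)^T *m C j)) *m gam) 0 0.
Proof.
have -> : (fun j => betahat A B dx sw 0 gam (S j)) = (fun j => C j *m gam).
  by apply: funext => j; rewrite betahat_confmx // add0r.
have sqnormE (M : 'M[R]_(d, q)) : sqnorm (M *m gam) = (gam^T *m (M^T *m M) *m gam) 0 0.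
  by rewrite -qform1 -qform_congr /qform mulmx1 !mulmxA.
rewrite /Vstat -mulmx_suml scalemxAl sqnormE !mulmxA; congr (1 - _ / _).
rewrite -scalemxAr -scalemxAl mxE mulmx_sumr mulmx_suml summxE.
by under eq_bigr do rewrite sqnormE.
Qed.

Lemma Vstat_betahat_le beta gam : 0 < sqnorm beta ->
  Vstat (fun j => betahat A B dx sw beta gam (S j))
  <= 4 * mean (fun j => \sum_i \sum_k C j i k ^+ 2) / sqnorm beta * sqnorm gam.
Proof.
move=> beta_gt0.
have -> : (fun j => betahat A B dx sw beta gam (S j)) = (fun j => beta + C j *m gam).
  by apply: funext => j; rewrite betahat_confmx.
apply: le_trans (Vstat_shift_le m_gt0 _ beta_gt0) _.
rewrite [X in _ <= X]mulrAC -[4 * _ * sqnorm gam]mulrA.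
rewrite ler_wpM2r ?invr_ge0 ?sqnorm_ge0 // ler_wpM2l // /mean_sqnorm /mean -mulrA.
by rewrite ler_wpM2l ?invr_ge0 // mulr_suml ler_sum // => j _; exact: sqnorm_mulmx_le.
Qed.

End ConfoundedStability.

Theorem mainTheorem2 (R : realType) (d q r m : nat)
  (hd : (0 < d)%N) (hq : (0 < q)%N) (hr : (0 < r)%N) (hm : (0 < m)%N)
  (A : 'M[R]_(q, r)) (B : 'M[R]_(d, r))
  (dx : 'rV[R]_d) (sw : 'rV[R]_q)
  (hdx : forall i, 0 < dx 0 i) (hsw : forall i, 0 < sw 0 i)
  (S : 'I_m -> {set 'I_q}) (hS : forall j, S j \proper [set: 'I_q]%SET) :
  let C := fun j => confmx A B dx sw (S j) in
  let Cm := m%:R^-1 *: \sum_j C j in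
  let Ct := m%:R^-1 *: \sum_j ((C j)^T *m C j) in
  (* (1) rho_beta = 0, i.e. beta = 0 *)
  (forall gam : 'cV[R]_q,
     Vstat (fun j => betahat A B dx sw 0 gam (S j))
     = 1 - (gam^T *m Cm^T *m Cm *m gam) 0 0 / (gam^T *m Ct *m gam) 0 0)
  /\
  (* (2) rho_gamma^2 / rho_beta^2 -> 0, all other quantities fixed *)
  (forall (d0 : measure_display) (T : measurableType d0) (P : probability T R)
          (beta : nat -> 'cV[R]_d) (gam : nat -> T -> 'cV[R]_q)
          (rho_b rho_g : nat -> R) (K : R),
     (forall n, 0 < rho_b n) -> (forall n, 0 <= rho_g n) ->
     (forall n, Num.sqrt (sqnorm (beta n)) = rho_b n) ->
     (forall n (i : 'I_q), measurable_fun setT (fun w => gam n w i 0)) ->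
     (forall n, spherically_symmetric P hq (gam n)) ->
     (forall n, (\int[P]_w ((sqnorm (gam n w)) ^+ 2)%:E
                 <= (K * rho_g n ^+ 4 / (q%:R ^+ 2))%:E)%E) ->
     (fun n => rho_g n ^+ 2 / rho_b n ^+ 2) @ \oo --> 0 ->
     (fun n => (\int[P]_w
        (Vstat (fun j => betahat A B dx sw (beta n) (gam n w) (S j)))%:E)%E)
       @ \oo --> 0%E).
Proof.
move=> C Cm Ct; split; first exact: (Vstat_betahat0 A B hdx hsw S).
move=> d0 T P beta gam rho_b rho_g K rb_gt0 _ norm_beta gam_meas _ gam_moment ratio_cvg.
set c := mean (fun j => \sum_i \sum_k C j i k ^+ 2).
have beta_sqnorm n : sqnorm (beta n) = rho_b n ^+ 2.
  by rewrite -norm_beta sqr_sqrtr // sqnorm_ge0.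
have msq n := measurable_sqnorm (gam_meas n).
refine (integral_cvg0_sqr_bound
  (V := fun n w => Vstat (fun j => betahat A B dx sw (beta n) (gam n w) (S j)))
  (X := fun n w => 4 * c / rho_b n ^+ 2 * sqnorm (gam n w))
  (k := 16 * c ^+ 2 * K / q%:R ^+ 2) _ _ _ _ _ ratio_cvg).
- by move=> n w; exact: Vstat_ge0.
- move=> n w; rewrite -beta_sqnorm; apply: (Vstat_betahat_le A B hdx hsw S hm).
  by rewrite beta_sqnorm exprn_gt0.
- by move=> n; exact: measurable_funM.
- move=> n; rewrite [X in (_ <= X%:E)%E]
    (_ : _ = (4 * c / rho_b n ^+ 2) ^+ 2 * (K * rho_g n ^+ 4 / q%:R ^+ 2)).
    exact: integral_scaled_sqr_le (msq n) (gam_moment n).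
  by field; rewrite pnatr_eq0 -lt0n hq gt_eqF.
- by move=> n; rewrite divr_ge0 ?sqr_ge0.
Qed.
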